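(* Let $G=(V,E)$ be a finite simple undirected graph with $N=|V|\ge 2$ vertices. Then \[\frac{1}{N}\sum_{v\in V}\tilde C_v(G)\le C(G),\] i.e. the expected average clustering coefficient after deleting a uniformly random vertex is at most $C(G)$.
   Context: For a vertex $u$ of a graph, $d_u$ is its degree and $T(u)$ the number of triangles containing $u$; the local clustering coefficient is $C(u)=\frac{2T(u)}{d_u(d_u-1)}$ if $d_u>1$ and $C(u)=0$ otherwise. The average clustering coefficient of a graph $H$ with $n\ge1$ vertices is $C(H)=\frac1n\sum_{u\in V(H)}C(u)$ (local coefficients computed in $H$). For $v\in V$, $\tilde C_v(G)=C(G[V\setminus\{v\}])$, where $G[S]$ denotes the induced subgraph on $S$. *)

From HB Require Import structures.
From mathcomp Require Import all_boot all_order all_algebra.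
Set Implicit Arguments. Unset Strict Implicit. Unset Printing Implicit Defensive.
Import Order.TTheory GRing.Theory Num.Theory.
Local Open Scope ring_scope.

(* A finite simple undirected graph: vertex type T, adjacency e symmetric and
   irreflexive.  Quantities "in G[S]" are computed in the induced subgraph on S. *)
Definition simple_graph (T : finType) (e : rel T) : Prop :=
  symmetric e /\ irreflexive e.

Definition deg_in (T : finType) (e : rel T) (S : {set T}) (u : T) : nat :=
  #|[set w in S | e u w]|.

Definition tri_in (T : finType) (e : rel T) (S : {set T}) (u : T) : nat :=
  #|[set A : {set T} | [&& A \subset S, #|A| == 3%N, u \in A &
       [forall x in A, forall y in A, (x != y) ==> e x y]]]|.

Definition local_clust (R : realFieldType) (T : finType) (e : rel T)
  (S : {set T}) (u : T) : R :=
  let d := deg_in e S u in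
  if (1 < d)%N then (2 * (tri_in e S u)%:R) / (d%:R * (d.-1)%:R) else 0.

Definition avg_clust (R : realFieldType) (T : finType) (e : rel T)
  (S : {set T}) : R :=
  (#|S|%:R)^-1 * \sum_(u in S) local_clust R e S u.

Definition del_clust (R : realFieldType) (T : finType) (e : rel T) (v : T) : R :=
  avg_clust R e ([set: T] :\ v).

From HB Require Import structures.
From mathcomp Require Import all_boot all_order all_algebra.
From mathcomp Require Import ring lra zify.
Set Implicit Arguments. Unset Strict Implicit. Unset Printing Implicit Defensive.
Import Order.TTheory GRing.Theory Num.Theory.
Local Open Scope ring_scope.

(* Fix a vertex u of degree d, lying on t triangles, with coefficient C.  Deleting a
   non-neighbour of u leaves C unchanged; deleting one of the d neighbours v lowers the
   degree to d - 1 and the triangle count to t - t_v, where the t_v sum to 2t.  So for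
   d >= 3 the coefficients of u in the N - 1 graphs G - v sum to exactly (N - 1) C, while
   for d <= 2 each of them is 0 or C.  Summing over u and exchanging the two sums gives
   the inequality. *)

Lemma sum_nat_indicator (I : finType) (A : {pred I}) (P : pred I) :
  (\sum_(i in A) (P i : nat) = #|[pred i in A | P i]|)%N.
Proof.
rewrite -sum1_card [RHS]big_mkcond [LHS]big_mkcond /=.
by apply: eq_bigr => i _; rewrite !inE; case: (i \in A); case: (P i).
Qed.

Section InducedSubgraph.

Variables (T : finType) (e : rel T).

Definition triangles (S : {set T}) (u : T) : {set {set T}} :=
  [set A : {set T} | [&& A \subset S, #|A| == 3%N, u \in A &
       [forall x in A, forall y in A, (x != y) ==> e x y]]].

Definition tri_through (S : {set T}) (u v : T) : nat :=
  #|[set A in triangles S u | v \in A]|.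

Lemma deg_inD1 (S : {set T}) (u v : T) : v \in S ->
  deg_in e S u = (deg_in e (S :\ v) u + e u v)%N.
Proof.
move=> vS; rewrite /deg_in (cardsD1 v) addnC inE vS /=; congr (_ + _)%N.
by apply: eq_card => w; rewrite !inE; case: (w == v); rewrite ?andbF.
Qed.

Lemma tri_inD1 (S : {set T}) (u v : T) :
  tri_in e S u = (tri_in e (S :\ v) u + tri_through S u v)%N.
Proof.
rewrite /tri_in /tri_through /triangles -(cardsID [set A : {set T} | v \notin A]).
congr (_ + _)%N; apply: eq_card => A; rewrite !inE ?subsetD1;
  by case: (v \in A); rewrite ?andbF ?andbT.
Qed.

Lemma tri_through_nonadj (S : {set T}) (u v : T) : v != u -> ~~ e u v ->
  tri_through S u v = 0%N.
Proof.
move=> vu nuv; apply/eqP; rewrite cards_eq0; apply/eqP/setP => A; rewrite !inE.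
apply/negbTE/negP => /andP [/and4P [_ _ uA /forall_inP adjA] vA].
by move: (adjA u uA) => /forall_inP /(_ v vA); rewrite eq_sym vu (negbTE nuv).
Qed.

(* Each triangle through [u] is counted once for each of its two other vertices. *)
Lemma sum_tri_through (S : {set T}) (u : T) :
  (\sum_(v in S :\ u) tri_through S u v = 2 * tri_in e S u)%N.
Proof.
have through v : tri_through S u v = (\sum_(A in triangles S u) (v \in A))%N.
  by rewrite sum_nat_indicator; apply: eq_card => A; rewrite !inE.
under eq_bigr do rewrite through.
rewrite exchange_big /= [tri_in _ _ _]/tri_in -/(triangles S u) mulnC -sum_nat_const.
apply: eq_bigr => A; rewrite inE => /and4P [AS /eqP A3 uA _].
have <- : #|A :\ u| = 2%N by move: A3; rewrite (cardsD1 u) uA; case.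
rewrite sum_nat_indicator; apply: eq_card => v; rewrite !inE.
by case: (v \in A) (subsetP AS v) => [/(_ isT) ->|_]; rewrite ?andbF ?andbT.
Qed.

Hypothesis e_irr : irreflexive e.

Lemma sum_adj (S : {set T}) (u : T) :
  (\sum_(v in S :\ u) (e u v : nat) = deg_in e S u)%N.
Proof.
rewrite sum_nat_indicator; apply: eq_card => v; rewrite !inE.
by case: eqP => [->|]; rewrite ?e_irr ?andbF.
Qed.

End InducedSubgraph.

Section LocalClustering.

Variables (R : realFieldType) (T : finType) (e : rel T).
Hypothesis e_irr : irreflexive e.

Lemma local_clust_ge0 (S : {set T}) (u : T) : 0 <= local_clust R e S u.
Proof.
rewrite /local_clust; case: ifP => // _.
by apply: divr_ge0; rewrite ?mulr_ge0 ?ler0n.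
Qed.

Lemma local_clustD1_nonadj (S : {set T}) (u v : T) : v \in S :\ u -> ~~ e u v ->
  local_clust R e (S :\ v) u = local_clust R e S u.
Proof.
rewrite !inE => /andP [vu vS] nuv.
rewrite /local_clust (deg_inD1 _ u vS) (tri_inD1 e S u v).
by rewrite tri_through_nonadj // (negbTE nuv) !addn0.
Qed.

Lemma sum_local_clustD1_le (S : {set T}) (u : T) : u \in S ->
  \sum_(v in S :\ u) local_clust R e (S :\ v) u <=
  (#|S|.-1)%:R * local_clust R e S u.
Proof.
move=> uS; rewrite (cardsD1 u S) uS /= mulr_natl -sumr_const.
set d := deg_in e S u; set t := tri_in e S u; set C := local_clust R e S u.
have degD1 v : v \in S :\ u -> deg_in e (S :\ v) u = (d - e u v)%N.
  by rewrite !inE => /andP [_ vS]; rewrite /d (deg_inD1 _ u vS) addnK.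
case: (leqP d 2) => [d_le2 | d_gt2].
  apply: ler_sum => v vSu; case: (boolP (e u v)) => [uv | nuv].
    rewrite {1}/local_clust degD1 // uv; case: ifP => [|_]; last exact: local_clust_ge0.
    by move: d_le2; lia.
  by rewrite local_clustD1_nonadj.
have [k dk] : exists k, d = k.+3 by exists (d - 3)%N; lia.
set K : R := (k.+3)%:R * (k.+2)%:R * (k.+1)%:R.
have K_neq0 : K != 0 by rewrite /K !mulf_neq0 // pnatr_eq0.
have C_def : C = 2 * t%:R / ((k.+3)%:R * (k.+2)%:R) by rewrite /C /local_clust -/d dk.
(* Linearised in [e u v] and [tri_through e S u v], so that the corrections cancel
   after summation by [sum_adj] and [sum_tri_through]. *)
have clustD1_affine v : v \in S :\ u -> local_clust R e (S :\ v) u =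
    C + (4 * t%:R / K) * (e u v)%:R - (2 * d%:R / K) * (tri_through e S u v)%:R.
  move=> vSu; case: (boolP (e u v)) => [uv | nuv]; last first.
    move: (vSu); rewrite !inE => /andP [vu _].
    by rewrite local_clustD1_nonadj // tri_through_nonadj // !mulr0 subr0 addr0.
  have t_split : t = (tri_in e (S :\ v) u + tri_through e S u v)%N := tri_inD1 e S u v.
  have tri_del : tri_in e (S :\ v) u = (t - tri_through e S u v)%N by rewrite t_split addnK.
  rewrite /local_clust degD1 // uv dk subn1 /= tri_del natrB; last by rewrite t_split leq_addl.
  rewrite C_def /K -!natr1; field.
  have k_ge0 : 0 <= k%:R :> R by apply: ler0n.
  by apply/and3P; split; apply: lt0r_neq0; lra.
rewrite (eq_bigr _ clustD1_affine) sumrB big_split /= -!mulr_sumr -!natr_sum.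
rewrite sum_tri_through sum_adj // -/d -/t natrM -addrA.
suff -> : 4 * t%:R / K * d%:R - 2 * d%:R / K * (2 * t%:R) = 0 :> R by rewrite addr0.
by field.
Qed.

End LocalClustering.

Lemma avg_clustD1_le (R : realFieldType) (T : finType) (e : rel T) (S : {set T}) :
  irreflexive e -> (2 <= #|S|)%N ->
  (#|S|%:R)^-1 * \sum_(v in S) avg_clust R e (S :\ v) <= avg_clust R e S.
Proof.
move=> e_irr S_ge2; rewrite /avg_clust.
have cardD1 v : v \in S -> #|S :\ v| = #|S|.-1 by move=> vS; rewrite (cardsD1 v S) vS.
under eq_bigr => v vS do rewrite cardD1 //.
rewrite -mulr_sumr (exchange_big_dep (mem S)) /=; last by move=> v u _; rewrite !inE => /andP[].
have inD1 u : u \in S -> (fun v => (v \in S) && (u \in S :\ v)) =1 mem (S :\ u).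
  by move=> uS v; rewrite !inE uS andbT andbC eq_sym.
under eq_bigr => u uS do rewrite (eq_bigl _ _ (inD1 u uS)).
apply: ler_wpM2l; first by rewrite invr_ge0 ler0n.
rewrite ler_pdivrMl ?ltr0n; last by lia.
rewrite mulr_sumr; apply: ler_sum => u uS.
exact: sum_local_clustD1_le.
Qed.

Theorem mainTheorem6 (R : realFieldType) (T : finType) (e : rel T) :
  simple_graph e -> (2 <= #|T|)%N ->
  (#|T|%:R)^-1 * \sum_(v : T) del_clust R e v <= avg_clust R e [set: T].
Proof.
move=> [_ e_irr] T_ge2; rewrite -cardsT in T_ge2 *.
rewrite (eq_bigl (mem [set: T])) => [|v]; first exact: avg_clustD1_le.
exact: esym (in_setT v).
Qed.
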